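(* Let $\mathcal{P}$ be a locally finite poset and let $J$ and $\mu$ be as in the context. Then for every $(x,y,z)\in \mathcal{F}l^3(\mathcal{P})$ we have $$J(x,y,z)=\mu(x,y)\,\mu(y,z).$$
   Context: For a locally finite poset $\mathcal{P}$, let $\mathcal{F}l^2(\mathcal{P})=\{(x,y)\in\mathcal{P}^2: x\le y\}$ and $\mathcal{F}l^3(\mathcal{P})=\{(x,y,z)\in\mathcal{P}^3: x\le y\le z\}$. The Möbius function $\mu:\mathcal{F}l^2(\mathcal{P})\to\mathbb{Z}$ is defined by $\mu(x,x)=1$ and $\sum_{x\le a\le y}\mu(x,a)=0$ for $x<y$. Let $\delta_3(x,y,z)=1$ if $x=y=z$ and $0$ otherwise. The function $J:\mathcal{F}l^3(\mathcal{P})\to\mathbb{Z}$ is the unique function satisfying, for all $(x,y,z)\in\mathcal{F}l^3(\mathcal{P})$, $$\sum_{\substack{a,b\in\mathcal{P}\\ x\le a\le y\le b\le z}} J(a,y,b)=\delta_3(x,y,z).$$ *)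

From HB Require Import structures.
From mathcomp Require Import all_boot all_order all_algebra.
Set Implicit Arguments. Unset Strict Implicit. Unset Printing Implicit Defensive.
Import Order.TTheory GRing.Theory Num.Theory.

Local Open Scope order_scope.

(* A poset (T, <=) is locally finite when every closed interval [x,y] is
   finite; we witness this by a duplicate-free enumeration [itv x y] of the
   interval [x,y] = {a | x <= a <= y}. *)
Definition interval_enum (d : Order.disp_t) (T : porderType d)
    (itv : T -> T -> seq T) : Prop :=
  forall x y : T, uniq (itv x y) /\ (forall a, (a \in itv x y) = (x <= a <= y)).

Definition is_moebius (d : Order.disp_t) (T : porderType d)
    (itv : T -> T -> seq T) (mu : T -> T -> int) : Prop :=
  (forall x : T, mu x x = 1%R) /\
  (forall x y : T, x < y -> (\sum_(a <- itv x y) mu x a)%R = 0%R).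

Definition delta3 (d : Order.disp_t) (T : porderType d) (x y z : T) : int :=
  if (x == y) && (y == z) then 1%R else 0%R.

Definition is_J (d : Order.disp_t) (T : porderType d)
    (itv : T -> T -> seq T) (J : T -> T -> T -> int) : Prop :=
  forall x y z : T, x <= y -> y <= z ->
    (\sum_(a <- itv x y) \sum_(b <- itv y z) J a y b)%R = delta3 x y z.

From HB Require Import structures.
From mathcomp Require Import all_boot all_order all_algebra.
Import Order.TTheory GRing.Theory Num.Theory.
Set Implicit Arguments. Unset Strict Implicit.
Local Open Scope ring_scope.
Local Open Scope order_scope.

(* The partial sums S(a,b) = \sum_(c in [a,y]) J(c,y,b) satisfy
   \sum_(b in [y,z]) S(a,b) = delta(a,y) delta(y,z) for all z >= y, and so does
   delta(a,y) mu(y,b); a function on {b | y <= b} is determined by its sums over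
   the intervals [y,z] (strong induction on the size of [y,z]), hence
   S(a,b) = delta(a,y) mu(y,b).  Moebius inversion in the first variable then
   gives J(x,y,z) = mu(x,y) mu(y,z). *)

Lemma big_eq_delta (R : pzSemiRingType) (I : eqType) (s : seq I) (F : I -> R) j :
  uniq s -> j \in s -> \sum_(i <- s) (i == j)%:R * F i = F j.
Proof.
move=> uniq_s s_j; rewrite (bigD1_seq j) //= eqxx mul1r big1 ?addr0 // => i.
by move/negbTE ->; rewrite mul0r.
Qed.

Section LocallyFinitePoset.
Variables (d : Order.disp_t) (T : porderType d) (itv : T -> T -> seq T).
Hypothesis itv_enum : interval_enum itv.

Lemma itv_uniq x y : uniq (itv x y).
Proof. by case: (itv_enum x y). Qed.

Lemma mem_itv x y a : (a \in itv x y) = (x <= a <= y).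
Proof. by case: (itv_enum x y). Qed.

Lemma big_itv1 (F : T -> int) x : \sum_(a <- itv x x) F a = F x.
Proof.
rewrite (perm_big [:: x]) ?big_seq1 //.
apply: uniq_perm (itv_uniq x x) _ _ => // a.
by rewrite mem_itv inE eq_le andbC.
Qed.

Lemma perm_itv_ge x y a : x <= a ->
  perm_eq (itv a y) [seq c <- itv x y | a <= c].
Proof.
move=> le_xa; apply: uniq_perm; rewrite ?filter_uniq ?itv_uniq // => c.
rewrite mem_filter !mem_itv; case: (boolP (a <= c)) => //= le_ac.
by rewrite (le_trans le_xa le_ac).
Qed.

Lemma perm_itv_le x y c : c <= y ->
  perm_eq (itv x c) [seq a <- itv x y | a <= c].
Proof.
move=> le_cy; apply: uniq_perm; rewrite ?filter_uniq ?itv_uniq // => a.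
rewrite mem_filter !mem_itv; case: (boolP (a <= c)) => le_ac; rewrite ?andbF //.
by rewrite (le_trans le_ac le_cy) !andbT.
Qed.

Lemma exchange_big_itv (F : T -> T -> int) x y :
  \sum_(a <- itv x y) \sum_(c <- itv a y) F a c =
  \sum_(c <- itv x y) \sum_(a <- itv x c) F a c.
Proof.
have sum_ge : {in itv x y, forall a,
    \sum_(c <- itv a y) F a c = \sum_(c <- itv x y | a <= c) F a c}.
  move=> a; rewrite mem_itv => /andP[le_xa _].
  by rewrite -[RHS]big_filter; apply/perm_big/perm_itv_ge.
have sum_le : {in itv x y, forall c,
    \sum_(a <- itv x c) F a c = \sum_(a <- itv x y | a <= c) F a c}.
  move=> c; rewrite mem_itv => /andP[_ le_cy].
  by rewrite -[RHS]big_filter; apply/perm_big/perm_itv_le.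
rewrite (eq_big_seq _ sum_ge) (eq_big_seq _ sum_le).
exact: (exchange_big_dep predT).
Qed.

Lemma size_itv_lt y b z : y <= b -> b < z -> (size (itv y b) < size (itv y z))%N.
Proof.
move=> le_yb lt_bz; have le_yz := le_trans le_yb (ltW lt_bz).
apply: (@uniq_leq_size _ (z :: itv y b)) => [|a].
  by rewrite cons_uniq itv_uniq mem_itv (lt_geF lt_bz) andbF.
rewrite inE !mem_itv => /predU1P[-> | /andP[le_ya le_ab]].
  by rewrite le_yz lexx.
by rewrite le_ya (le_trans le_ab (ltW lt_bz)).
Qed.

Lemma itv_sums_eq0 (g : T -> int) y :
  (forall z, y <= z -> \sum_(b <- itv y z) g b = 0%R) ->
  forall z, y <= z -> g z = 0%R.
Proof.
move=> g_sum0 z; have [n] := ubnP (size (itv y z)).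
elim: n z => // n IHn z size_lt le_yz.
have z_itv : z \in itv y z by rewrite mem_itv le_yz lexx.
have := g_sum0 z le_yz; rewrite (bigD1_seq z) ?itv_uniq //= big1_seq ?addr0 // => b.
rewrite mem_itv => /andP[ne_bz /andP[le_yb le_bz]].
have lt_bz : b < z by rewrite lt_neqAle ne_bz.
exact: IHn b (leq_trans (size_itv_lt le_yb lt_bz) size_lt) le_yb.
Qed.

Variable mu : T -> T -> int.
Hypothesis mu_moebius : is_moebius itv mu.

Lemma moebius_sum x z : x <= z -> \sum_(a <- itv x z) mu x a = (x == z)%:R.
Proof.
case: mu_moebius => mu_id mu_sum0 le_xz; have [<- | ne_xz] := eqVneq x z.
  by rewrite big_itv1 mu_id.
by rewrite mu_sum0 // lt_neqAle ne_xz.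
Qed.

Lemma moebius_inversion_down (K F : T -> int) x y : x <= y ->
  {in itv x y, forall a, F a = \sum_(c <- itv a y) K c} ->
  K x = \sum_(a <- itv x y) mu x a * F a.
Proof.
move=> le_xy defF.
under eq_big_seq => a /defF -> do rewrite mulr_sumr.
rewrite exchange_big_itv.
transitivity (\sum_(c <- itv x y) (c == x)%:R * K c).
  by rewrite big_eq_delta ?itv_uniq // mem_itv lexx.
rewrite !big_seq; apply: eq_bigr => c; rewrite mem_itv => /andP[le_xc _].
by rewrite -mulr_suml moebius_sum // eq_sym.
Qed.

Lemma J_left_sum J : is_J itv J -> forall a y b, a <= y -> y <= b ->
  \sum_(c <- itv a y) J c y b = (a == y)%:R * mu y b.
Proof.
move=> J_sum a y b le_ay le_yb; apply/eqP; rewrite -subr_eq0; apply/eqP.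
apply: (@itv_sums_eq0 (fun b => \sum_(c <- itv a y) J c y b - (a == y)%:R * mu y b))
  le_yb => z le_yz.
rewrite big_split /= exchange_big J_sum // sumrN -mulr_sumr moebius_sum // /delta3.
by case: (a == y); case: (y == z); rewrite ?mul1r ?mul0r subrr.
Qed.

End LocallyFinitePoset.

Theorem theorem5p2 (d : Order.disp_t) (T : porderType d)
    (itv : T -> T -> seq T) (mu : T -> T -> int) (J : T -> T -> T -> int) :
  interval_enum itv -> is_moebius itv mu -> is_J itv J ->
  forall x y z : T, (x <= y)%O -> (y <= z)%O ->
    J x y z = (mu x y * mu y z)%R.
Proof.
move=> itv_enum mu_moebius J_sum x y z le_xy le_yz.
have J_left a : a \in itv x y -> (a == y)%:R * mu y z = \sum_(c <- itv a y) J c y z.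
  rewrite (mem_itv itv_enum) => /andP[_ le_ay].
  by rewrite (J_left_sum itv_enum mu_moebius J_sum).
rewrite (moebius_inversion_down itv_enum mu_moebius (K := fun c => J c y z) le_xy J_left).
under eq_bigr do rewrite mulrCA.
by rewrite big_eq_delta ?(itv_uniq itv_enum) // (mem_itv itv_enum) lexx le_xy.
Qed.
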